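(* If $p$ is a prime with $p \equiv 3 \pmod 4$, then $S_2(p)$ is infinite.
   Context: For a positive integer $m$, consider positive rational solutions $(x,y)$ of $x^y = y^{mx}$ with $x \neq 1$. For such a solution, $r = \log y / \log x$ is a positive rational number (so $y = x^r$); write $r = a/b$ with $a,b$ positive coprime integers. For an integer $k \ge 1$, $S_k(m)$ denotes the set of such solutions $(x,y)$ for which $|a-b| = k$. *)

From Stdlib Require Import Reals.
From mathcomp Require Import all_boot all_order all_algebra.
From mathcomp Require Import Rstruct.
From mathcomp Require Import classical_sets cardinality.

Set Implicit Arguments.
Unset Strict Implicit.
Unset Printing Implicit Defensive.

Definition Rq (q : rat) : R := ratr q.

Definition is_sol (m : nat) (x y : rat) : Prop :=
  (0 < x)%R /\ (0 < y)%R /\ x <> 1%R /\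
  Rpower (Rq x) (Rq y) = Rpower (Rq y) (INR m * Rq x).

Definition S (k m : nat) : set (rat * rat) :=
  [set s | is_sol m s.1 s.2 /\
     exists a b : nat, (0 < a)%N /\ (0 < b)%N /\ coprime a b /\
       Rdiv (ln (Rq s.2)) (ln (Rq s.1)) = Rdiv (INR a) (INR b) /\
       ((a - b) + (b - a))%N = k].

From Stdlib Require Import Reals.
From mathcomp Require Import all_boot all_order all_algebra.
From mathcomp Require Import Rstruct.
From mathcomp Require Import classical_sets cardinality.
From mathcomp Require Import zify ring lra.
Import Order.TTheory GRing.Theory Num.Theory.

(* By Dirichlet's approximation theorem infinitely many pairs (x, y) satisfy
   |x^2 - p y^2| <= 2p.  Two of them with the same norm n that are congruent
   modulo n divide to a nontrivial solution of u^2 - p v^2 = 1.  A descent on v,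
   which uses p = 3 (mod 4), turns it into a solution of s^2 - p t^2 = +-2, and
   multiplication by u + v sqrt p gives infinitely many such (s, t) with the
   same sign.  For each, a = s^2 and b = p t^2 are coprime with |a - b| = 2, and
   q = (s/t)^(+-1) satisfies q^(a-b) = p a / b, which is exactly the condition
   for x = q^b and y = q^a = x^(a/b) to solve x^y = y^(p x).
*)

Lemma pigeonhole_seq {T T' : eqType} [f : T -> T'] [s : seq T] [r : seq T'] :
  uniq s -> {subset map f s <= r} -> size r < size s ->
  exists x y, [/\ x \in s, y \in s, x != y & f x = f y].
Proof.
case: s => [|x0 s0] // uniq_s sub_r lt_rs.
have /(uniqPn (f x0))[i [j [lt_ij lt_js]]] : ~~ uniq (map f (x0 :: s0)).
  by apply: contraL lt_rs => /uniq_leq_size /(_ sub_r); rewrite size_map -leqNgt.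
rewrite size_map in lt_js; have lt_is := ltn_trans lt_ij lt_js.
rewrite !(nth_map x0) // => fij.
exists (nth x0 (x0 :: s0) i), (nth x0 (x0 :: s0) j); split; rewrite ?mem_nth //.
by rewrite nth_uniq // ltn_eqF.
Qed.

Lemma infinite_set_inj_nat {T} [A : set T] (f : nat -> T) :
  injective f -> (forall n, A (f n)) -> infinite_set A.
Proof.
move=> f_inj fA /(finite_preimage (f := f) (fun m n _ _ => @f_inj m n)) fin_f.
by apply: infinite_nat; apply: sub_finite_set fin_f => n _; apply: fA.
Qed.

Lemma gcdn_sqr_coprime_mul [a b w] :
  coprime a b -> a * b = w ^ 2 -> gcdn a w ^ 2 = a.
Proof.
move=> /eqP cop_ab abw.
have gab : gcdn (gcdn a w) (gcdn w b) = 1.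
  by apply/eqP; rewrite -dvdn1 -cop_ab dvdn_gcd (dvdn_trans (dvdn_gcdl _ _)) ?dvdn_gcdl //=
    (dvdn_trans (dvdn_gcdr _ _)) ?dvdn_gcdr.
rewrite -mulnn muln_gcdr !muln_gcdl.
by rewrite [w * w]mulnn -abw [w * a]mulnC -!muln_gcdr gab muln1.
Qed.

Lemma coprime_mul_prime_sqr [p a b w] : prime p -> coprime a b -> a * b = p * w ^ 2 ->
  (exists s t, a = s ^ 2 /\ b = p * t ^ 2) \/ (exists s t, a = p * s ^ 2 /\ b = t ^ 2).
Proof.
move=> p_pr; have p_gt0 := prime_gt0 p_pr.
wlog /dvdnP[a' ->] : a b / p %| a => [hwlog cop_ab abw | cop_ab abw].
  have : p %| a * b by rewrite abw dvdn_mulr.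
  rewrite Euclid_dvdM // => /orP[pa | pb]; first exact: hwlog.
  rewrite coprime_sym mulnC in cop_ab abw.
  by case: (hwlog b a pb cop_ab abw) => -[s [t [-> ->]]]; [right | left]; exists t, s.
rewrite coprimeMl in cop_ab; case/andP: cop_ab => cop_ab _.
have a'bw : a' * b = w ^ 2 by apply/eqP; rewrite -(eqn_pmul2l p_gt0) -abw; lia.
right; exists (gcdn a' w), (gcdn b w); split.
  by rewrite (gcdn_sqr_coprime_mul cop_ab a'bw) mulnC.
by rewrite (@gcdn_sqr_coprime_mul b a') 1?coprime_sym // mulnC.
Qed.

Lemma coprime_addn2 n : coprime n (n + 2) = odd n.
Proof. by rewrite /coprime gcdnDl -/(coprime n 2) coprimen2. Qed.

Lemma sqr_neq_prime_mul_sqr [p] x [y] : prime p -> 0 < y -> x ^ 2 != p * y ^ 2.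
Proof.
move=> p_pr y_gt0; apply/eqP => sq_eq.
have x_gt0 : 0 < x by rewrite -sqrn_gt0 sq_eq muln_gt0 prime_gt0 // sqrn_gt0.
have /(congr1 odd) := congr1 (logn p) sq_eq.
by rewrite lognM ?sqrn_gt0 ?(prime_gt0 p_pr) // !lognX (logn_prime p p_pr) eqxx oddD !oddM.
Qed.

Lemma sqrn_mod4 n : n ^ 2 %% 4 = odd n.
Proof. by rewrite -[in LHS](odd_double_half n); case: (odd n); lia. Qed.

Lemma mul_sqr_mod4 [p] t : p %% 4 = 3 -> p * t ^ 2 %% 4 = 3 * odd t.
Proof. by move=> p_mod4; rewrite -modnMm p_mod4 sqrn_mod4; case: (odd t). Qed.

Lemma sqr_add1_neq_mul_sqr [p] s t : p %% 4 = 3 -> s ^ 2 + 1 != p * t ^ 2.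
Proof.
move=> p_mod4; apply/eqP => /(congr1 (modn^~ 4)); rewrite mul_sqr_mod4 // -modnDml sqrn_mod4.
by case: (odd s); case: (odd t).
Qed.

Lemma odd_pell [p u v] : p %% 4 = 3 -> u ^ 2 = p * v ^ 2 + 1 -> odd u = ~~ odd v.
Proof.
move=> p_mod4 /(congr1 (modn^~ 4)); rewrite -modnDml mul_sqr_mod4 // sqrn_mod4.
by case: (odd u); case: (odd v).
Qed.

Definition near_pell (p s t : nat) : Prop := s ^ 2 + 2 = p * t ^ 2 \/ s ^ 2 = p * t ^ 2 + 2.

Lemma near_pell_of_pell [p u v] : prime p -> p %% 4 = 3 -> 0 < v -> u ^ 2 = p * v ^ 2 + 1 ->
  exists s t, [/\ 0 < s, 0 < t & near_pell p s t].
Proof.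
move=> p_pr p_mod4; have p_gt1 := prime_gt1 p_pr.
elim/ltn_ind: v u => v IHv u v_gt0 uv.
have u_gt1 : 1 < u by nia.
have [u_odd | u_even] := boolP (odd u).
  have v_even : ~~ odd v by rewrite -(odd_pell p_mod4 uv).
  have uE := odd_double_half u; have vE := odd_double_half v.
  rewrite u_odd (negbTE v_even) /= in uE vE.
  set k := u./2 in uE; set w := v./2 in vE.
  have kk1 : k * k.+1 = p * w ^ 2 by nia.
  (* k = s^2, k + 1 = p t^2 is impossible mod 4, so (t, s) is a smaller solution *)
  case: (coprime_mul_prime_sqr p_pr (coprimenS k) kk1) => -[s [t [kE k1E]]].
    by have := sqr_add1_neq_mul_sqr s t p_mod4; rewrite -kE -k1E addn1 eqxx.
  have wE : w = s * t.
    by apply/eqP; rewrite -eqn_sqr -(eqn_pmul2l (prime_gt0 p_pr)) expnMn mulnA -kE -k1E kk1.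
  have s_gt0 : 0 < s.
    have : 0 < k by lia.
    by rewrite kE muln_gt0 sqrn_gt0 => /andP[].
  have t_gt0 : 0 < t by rewrite -sqrn_gt0 -k1E.
  apply: (IHv s _ t) => //; last by rewrite -k1E kE addn1.
  by rewrite -vE wE; move: (leq_pmulr s t_gt0); lia.
have uu1 : u.-1 * u.+1 = p * v ^ 2 by nia.
have cop : coprime u.-1 u.+1.
  have -> : u.+1 = u.-1 + 2 by lia.
  by rewrite coprime_addn2; move: u_even; rewrite -[in odd u](prednK (ltnW u_gt1)) oddS negbK.
case: (coprime_mul_prime_sqr p_pr cop uu1) => -[s [t [aE bE]]]; [exists s, t | exists t, s].
  split; [by rewrite -sqrn_gt0 -aE; lia | | by left; lia].
  have : 0 < p * t ^ 2 by rewrite -bE.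
  by rewrite muln_gt0 sqrn_gt0 => /andP[].
split; [by rewrite -sqrn_gt0 -bE | | by right; lia].
have : 0 < p * s ^ 2 by rewrite -aE; lia.
by rewrite muln_gt0 sqrn_gt0 => /andP[].
Qed.

Lemma coprime_near_pell p s t : p %% 4 = 3 -> near_pell p s t -> coprime (s ^ 2) (p * t ^ 2).
Proof.
move=> p_mod4 st.
have odd_p : odd p by rewrite (divn_eq p 4) p_mod4 oddD oddM andbF.
have odd_t : odd t.
  have := sqrn_mod4 s; have := mul_sqr_mod4 t p_mod4.
  by case: (odd s); case: (odd t) => //=; rewrite ?muln0; case: st; lia.
have odd_b : odd (p * t ^ 2) by rewrite oddM oddX odd_p odd_t orbT.
case: st => [st | ->]; last by rewrite coprime_sym coprime_addn2.
by rewrite -st coprime_addn2; move: odd_b; rewrite -st oddD addbF.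
Qed.

Definition pell_step (p u v : nat) (z : nat * nat) : nat * nat :=
  (z.1 * u + p * z.2 * v, z.1 * v + z.2 * u).

Lemma pell_iter_fst_gt0 p u v z n : 0 < u -> 0 < z.1 -> 0 < (iter n (pell_step p u v) z).1.
Proof. by move=> u_gt0 z1_gt0; elim: n => //= n IH; rewrite ltn_addr // muln_gt0 IH. Qed.

Lemma pell_iter_snd_increasing p u v z : 0 < u -> 0 < v -> 0 < z.1 ->
  {homo (fun n => (iter n (pell_step p u v) z).2) : m n / m < n}.
Proof.
move=> u_gt0 v_gt0 z1_gt0; apply: (homo_ltn ltn_trans) => n /=.
have := pell_iter_fst_gt0 p u v z n u_gt0 z1_gt0; case: (iter n _ z) => x y /= x_gt0.
by nia.
Qed.

Local Open Scope ring_scope.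

Definition pell_norm (p : nat) (x y : int) : int := x ^+ 2 - p%:Z * y ^+ 2.

Lemma pell_normM p x y u v :
  pell_norm p (x * u + p%:Z * y * v) (x * v + y * u) = pell_norm p x y * pell_norm p u v.
Proof. by rewrite /pell_norm; ring. Qed.

Lemma pell_norm_iter p u v z n : (u ^ 2 = p * v ^ 2 + 1)%N ->
  pell_norm p (iter n (pell_step p u v) z).1 (iter n (pell_step p u v) z).2 =
  pell_norm p z.1 z.2.
Proof.
move=> uv; have uv1 : pell_norm p u v = 1 by rewrite /pell_norm; lia.
by elim: n => //= n <-; rewrite !PoszD !PoszM pell_normM uv1 mulr1.
Qed.

Lemma pell_norm_neq0 [p] x [y : nat] : prime p -> (0 < y)%N -> pell_norm p x y != 0.
Proof.
move=> p_pr y_gt0; have := sqr_neq_prime_mul_sqr `|x| p_pr y_gt0; apply: contra.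
by rewrite /pell_norm -(real_normK (num_real x)) -abszE subr_eq0 => /eqP; lia.
Qed.

Lemma pell_of_congruent_pairs [p] [x1 x2 : int] [y1 y2 : nat] :
  (x1, y1) != (x2, y2) -> (0 < y1)%N -> (0 < y2)%N ->
  pell_norm p x1 y1 = pell_norm p x2 y2 -> pell_norm p x1 y1 != 0 ->
  (pell_norm p x1 y1 %| x1 - x2)%Z -> (pell_norm p x1 y1 %| y1%:Z - y2%:Z)%Z ->
  exists u v : nat, (0 < v)%N /\ (u ^ 2 = p * v ^ 2 + 1)%N.
Proof.
set n := pell_norm p x1 y1 => ne12 y1_gt0 y2_gt0 n12 n_neq0 /dvdzP[a xE] /dvdzP[b yE].
have x2E : x2 = x1 - a * n by rewrite -xE opprB addrC subrK.
have y2E : y2%:Z = y1%:Z - b * n by rewrite -yE opprB addrC subrK.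
(* (u + v sqrt p) n = (x1 + y1 sqrt p) (x2 - y2 sqrt p) *)
pose u := 1 - x1 * a + p%:Z * y1%:Z * b; pose v := a * y1%:Z - x1 * b.
have uvE : n ^+ 2 * pell_norm p u v = n ^+ 2.
  transitivity (pell_norm p (x1 * x2 + p%:Z * y1%:Z * - y2%:Z) (x1 * - y2%:Z + y1%:Z * x2)).
    by rewrite x2E y2E /u /v /n /pell_norm; ring.
  by rewrite pell_normM [pell_norm p x2 _]/pell_norm sqrrN -/(pell_norm p x2 y2) -n12 expr2.
have {uvE} uv1 : pell_norm p u v = 1.
  by apply: (mulfI (expf_neq0 2 n_neq0)); rewrite uvE mulr1.
have v_neq0 : v != 0.
  apply: contra ne12 => /eqP v0.
  have : x1 * y2%:Z - x2 * y1%:Z = n * v by rewrite x2E y2E /v /n; ring.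
  rewrite v0 mulr0 => /eqP; rewrite subr_eq0 => /eqP cross.
  have : n * (y2%:Z ^+ 2 - y1%:Z ^+ 2) = (x1 * y2%:Z) ^+ 2 - (x2 * y1%:Z) ^+ 2.
    by rewrite mulrBr {1}/n n12 /pell_norm; ring.
  rewrite cross subrr => /eqP; rewrite mulf_eq0 (negbTE n_neq0) subr_eq0 /= => /eqP y12.
  have {y12} y12 : y1 = y2 by nia.
  have y1_neq0 : y1%:Z != 0 by rewrite eqz_nat -lt0n.
  have x12 : x1 = x2 by apply: (mulIf y1_neq0); rewrite -cross y12.
  by rewrite x12 y12.
exists `|u|%N, `|v|%N; split; first by rewrite absz_gt0.
move: uv1; rewrite /pell_norm -(real_normK (num_real u)) -(real_normK (num_real v)) -!abszE.
by lia.
Qed.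

Definition small_norm p (z : int * nat) : bool :=
  (0 < z.2)%N && (`|pell_norm p z.1 z.2| <= (2 * p)%N%:Z).

Lemma pell_of_small_norm_seq p s : prime p -> uniq s -> all (small_norm p) s ->
  ((4 * p).+1 * (2 * p) * (2 * p) < size s)%N ->
  exists u v : nat, (0 < v)%N /\ (u ^ 2 = p * v ^ 2 + 1)%N.
Proof.
move=> p_pr uniq_s small_s size_s.
(* equal codes mean equal norms n and congruence modulo n *)
pose code (z : int * nat) := let n := pell_norm p z.1 z.2 in
  (`|(n + (2 * p)%N%:Z)%R|%N, `|(z.1 %% n)%Z|%N, `|(z.2%:Z %% n)%Z|%N).
pose r := [seq (ij, k) | ij <- [seq (i, j) | i <- iota 0 (4 * p).+1, j <- iota 0 (2 * p)],
                         k <- iota 0 (2 * p)].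
have sub_r : {subset map code s <= r}.
  move=> _ /mapP[[x y] zs ->]; have /andP[/= y_gt0 n_le] := allP small_s _ zs.
  have n_neq0 := pell_norm_neq0 x p_pr y_gt0.
  have := modz_ge0 x n_neq0; have := ltz_mod x n_neq0.
  have := modz_ge0 y n_neq0; have := ltz_mod y n_neq0.
  move: n_le n_neq0; rewrite /code /=; set n := pell_norm p x y => n_le n_neq0 *.
  by rewrite allpairs_f ?allpairs_f // !mem_iota /=; lia.
have size_r : (size r < size s)%N by rewrite /r !size_allpairs !size_iota.
have [[x1 y1] [[x2 y2] [z1s z2s ne12]]] := pigeonhole_seq uniq_s sub_r size_r.
rewrite /code /= => -[nE xE yE].
have /andP[/= y1_gt0 n1_le] := allP small_s _ z1s.
have /andP[/= y2_gt0 n2_le] := allP small_s _ z2s.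
have n12 : pell_norm p x1 y1 = pell_norm p x2 y2 by move: nE n1_le n2_le; clear xE yE; lia.
have n1_neq0 := pell_norm_neq0 x1 p_pr y1_gt0.
rewrite -n12 in xE yE.
apply: (pell_of_congruent_pairs ne12 y1_gt0 y2_gt0 n12 n1_neq0); rewrite -eqz_mod_dvd; apply/eqP.
  by have := congr1 Posz xE; rewrite !gez0_abs ?modz_ge0.
by have := congr1 Posz yE; rewrite !gez0_abs ?modz_ge0.
Qed.

Lemma dirichlet_approx {R : archiRealFieldType} (a : R) [Q : nat] : (0 < Q)%N ->
  exists (X : int) (Y : nat), (0 < Y <= Q)%N /\ `|X%:~R - Y%:R * a| < Q%:R^-1.
Proof.
move=> Q_gt0; pose fr (y : nat) : R := y%:R * a - (Num.floor (y%:R * a))%:~R.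
have fr_itv y : 0 <= fr y < 1.
  by have := floor_itv (y%:R * a); rewrite intrD /fr => /andP[? ?]; apply/andP; split; lra.
pose box y := Num.trunc (Q%:R * fr y).
have box_itv y : (box y)%:R <= Q%:R * fr y < (box y).+1%:R.
  by apply: truncn_itv; rewrite mulr_ge0 ?ler0n //; case/andP: (fr_itv y).
have box_lt y : (box y < Q)%N.
  rewrite truncn_lt_nat ?mulr_ge0 ?ler0n //; last by case/andP: (fr_itv y).
  by rewrite gtr_pMr ?ltr0n //; case/andP: (fr_itv y).
have [y1 [y2 []]] : exists y1 y2, [/\ y1 \in iota 0 Q.+1, y2 \in iota 0 Q.+1,
    y1 != y2 & box y1 = box y2].
  apply: (@pigeonhole_seq _ _ box _ (iota 0 Q)); rewrite ?iota_uniq ?size_iota //.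
  by move=> _ /mapP[y _ ->]; rewrite mem_iota add0n box_lt.
wlog lt_y12 : y1 y2 / (y1 < y2)%N => [hwlog y1Q y2Q ne_y12 box12 | y1Q y2Q _ box12].
  have [lt12 | lt21 | eq12] := ltngtP y1 y2; first exact: hwlog lt12 y1Q y2Q ne_y12 box12.
    by apply: (hwlog y2 y1 lt21); rewrite // eq_sym.
  by rewrite eq12 eqxx in ne_y12.
exists (Num.floor (y2%:R * a) - Num.floor (y1%:R * a)), (y2 - y1)%N; split.
  rewrite subn_gt0 lt_y12; move: y2Q; rewrite mem_iota add0n ltnS => /andP[_].
  exact: leq_trans (leq_subr _ _).
have -> : (Num.floor (y2%:R * a) - Num.floor (y1%:R * a))%:~R - (y2 - y1)%N%:R * a
    = fr y1 - fr y2.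
  by rewrite intrB natrB 1?ltnW // /fr; ring.
rewrite -[Q%:R^-1]mul1r ltr_pdivlMr ?ltr0n // -[Q%:R]gtr0_norm ?ltr0n // -normrM ltr_norml.
have := box_itv y1; have := box_itv y2; rewrite box12 -natr1.
by move=> /andP[? ?] /andP[? ?]; apply/andP; split; lra.
Qed.

Section SqrtApproximation.

Context {R : archiRealFieldType} {p : nat} {alpha : R}.
Hypotheses (p_pr : prime p) (alpha_ge0 : 0 <= alpha) (alpha_sq : alpha ^+ 2 = p%:R).

Definition approx_err (z : int * nat) : R := `|z.1%:~R - z.2%:R * alpha|.

Lemma approx_err_gt0 z : (0 < z.2)%N -> 0 < approx_err z.
Proof.
case: z => x y /= y_gt0; rewrite normr_gt0 subr_eq0.
have := pell_norm_neq0 x p_pr y_gt0; apply: contra => /eqP /= xE.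
apply/eqP/(intr_inj (R := R)).
transitivity (y%:R ^+ 2 * (alpha ^+ 2 - p%:R) : R); last by rewrite alpha_sq subrr mulr0.
by rewrite /pell_norm intrB intrM !expr2 !intrM xE; ring.
Qed.

Lemma small_norm_approx x (y Q : nat) : (0 < y <= Q)%N ->
  `|x%:~R - y%:R * alpha| < Q%:R^-1 -> small_norm p (x, y).
Proof.
move=> /andP[y_gt0 y_leQ] err_lt; rewrite /small_norm y_gt0 /=.
set e := x%:~R - y%:R * alpha in err_lt.
have Q_gt0 : 0 < Q%:R :> R by rewrite ltr0n (leq_trans y_gt0).
have e_lt1 : `|e| < 1.
  by apply: (lt_le_trans err_lt); rewrite invf_le1 // ler1n (leq_trans y_gt0).
have ey_le1 : `|e| * y%:R <= 1.
  by rewrite -[leRHS](mulVf (lt0r_neq0 Q_gt0)) ler_pM ?normr_ge0 ?ler0n ?ler_nat // ltW.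
have alpha_le_p : alpha <= p%:R.
  rewrite -(ler_pXn2r (_ : 0 < 2)%N) ?nnegrE ?ler0n // alpha_sq -natrX ler_nat.
  by rewrite -{1}[p]expn1 leq_pexp2l ?prime_gt0.
have normE : (pell_norm p x y)%:~R = e * (e + 2 * y%:R * alpha).
  transitivity (e * (e + 2 * y%:R * alpha) + y%:R ^+ 2 * (alpha ^+ 2 - p%:R)).
    by rewrite /pell_norm /e intrB intrM !expr2 !intrM; ring.
  by rewrite alpha_sq subrr mulr0 addr0.
have : `|pell_norm p x y|%:~R < 1 + 2 * p%:R :> R.
  rewrite intr_norm normE normrM.
  have tri : `|e + 2 * y%:R * alpha| <= `|e| + 2 * y%:R * alpha.
    by rewrite (le_trans (ler_normD _ _)) // lerD2l ger0_norm // !mulr_ge0 ?ler0n.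
  have := ler_wpM2l (normr_ge0 e) tri.
  have : `|e| * `|e| < 1 by rewrite -[1]mulr1 ltr_pM ?normr_ge0.
  have : 2 * alpha * (`|e| * y%:R) <= 2 * alpha by rewrite ler_piMr ?mulr_ge0.
  lra.
by rewrite -ltzD1 -(ltr_int R) intrD -!pmulrn natrM addrC.
Qed.

Lemma exists_small_norm_approx [d] : 0 < d ->
  exists z, small_norm p z /\ 0 < approx_err z < d.
Proof.
move=> d_gt0.
have [x [y [yQ err_lt]]] := dirichlet_approx alpha (ltn0Sn (Num.trunc d^-1)).
exists (x, y); split; first exact: small_norm_approx yQ err_lt.
rewrite approx_err_gt0 /=; last by case/andP: yQ.
by apply: (lt_trans err_lt); rewrite invf_plt ?posrE ?ltr0n // truncnS_gt.
Qed.

Lemma small_norm_seq n : exists s, [/\ size s = n, uniq s & all (small_norm p) s].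
Proof.
suff [s [size_s uniq_s small_s _]] : exists s, [/\ size s = n, uniq s, all (small_norm p) s &
    exists2 d, 0 < d & {in s, forall z, d <= approx_err z}] by exists s.
elim: n => [|n [s [size_s uniq_s small_s [d d_gt0 d_le]]]].
  by exists [::]; split => //; exists 1.
have [z [small_z /andP[z_gt0 z_lt]]] := exists_small_norm_approx d_gt0.
exists (z :: s); split; rewrite /= ?size_s ?small_z //.
  by rewrite uniq_s andbT; apply/negP => /d_le; rewrite leNgt z_lt.
exists (approx_err z) => // w; rewrite inE => /predU1P[-> // | /d_le].
by apply: le_trans; rewrite ltW.
Qed.

End SqrtApproximation.

Lemma pell_solvable [p] : prime p -> exists u v : nat, (0 < v)%N /\ (u ^ 2 = p * v ^ 2 + 1)%N.
Proof.
move=> p_pr; pose alpha : R := Num.sqrt p%:R.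
have alpha_sq : alpha ^+ 2 = p%:R by rewrite sqr_sqrtr ?ler0n.
have [s [size_s uniq_s small_s]] :=
  small_norm_seq p_pr (sqrtr_ge0 _) alpha_sq ((4 * p).+1 * (2 * p) * (2 * p)).+1.
by apply: pell_of_small_norm_seq p_pr uniq_s small_s _; rewrite size_s.
Qed.

Lemma mem_S_pow p k (q : rat) (a b : nat) : 0 < q -> q != 1 -> (0 < a)%N -> (0 < b)%N ->
  coprime a b -> (a - b + (b - a))%N = k -> q ^+ a * b%:R = p%:R * a%:R * q ^+ b ->
  S k p (q ^+ b, q ^+ a).
Proof.
move=> q_gt0 q_neq1 a_gt0 b_gt0 cop_ab dist_ab qab.
pose r := Rq q.
have r_gt0 : 0 < r by rewrite /r /Rq ltr0q.
have Rq_pow n : Rq (q ^+ n) = r ^+ n by rewrite /Rq rmorphXn.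
have ln_pow n : ln (r ^+ n) = n%:R * ln r by rewrite -RpowE ln_pow -?INRE //; apply/RltP.
have ln_r_neq0 : ln r != 0.
  apply: contra q_neq1 => /eqP ln_r0; rewrite -(fmorph_eq1 (@ratr R)) -/(Rq q) -/r.
  by apply/eqP/ln_inv; rewrite ?ln_r0 ?ln_1 //; apply/RltP.
have qab_R : r ^+ a * b%:R = p%:R * a%:R * r ^+ b.
  by have := congr1 (@ratr R) qab; rewrite !rmorphM !rmorphXn !rmorph_nat.
split; last exists a, b.
  do 3?split; rewrite ?exprn_gt0 //=.
    by apply/eqP; rewrite pexpr_eq1 ?ltW // -lt0n.
  rewrite /Rpower !Rq_pow !ln_pow INRE !RmultE; congr exp.
  by transitivity (r ^+ a * b%:R * ln r); [ring | rewrite qab_R; ring].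
do 4?split => //=; rewrite !Rq_pow !ln_pow !INRE !RdivE.
by field; rewrite ln_r_neq0 pnatr_eq0 -lt0n b_gt0.
Qed.

Definition near_pell_ratio (p s t : nat) : rat :=
  if (p * t ^ 2 < s ^ 2)%N then s%:R / t%:R else t%:R / s%:R.

Definition near_pell_point (p s t : nat) : rat * rat :=
  (near_pell_ratio p s t ^+ (p * t ^ 2), near_pell_ratio p s t ^+ (s ^ 2)).

Lemma near_pell_ratio_gt0 p s t : (0 < s)%N -> (0 < t)%N -> 0 < near_pell_ratio p s t.
Proof. by move=> s_gt0 t_gt0; rewrite /near_pell_ratio; case: ifP; rewrite divr_gt0 ?ltr0n. Qed.

Lemma near_pell_ratio_eq [p s t] : (0 < s)%N -> (0 < t)%N -> near_pell p s t ->
  let q := near_pell_ratio p s t in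
  q ^+ (s ^ 2) * (p * t ^ 2)%:R = p%:R * (s ^ 2)%:R * q ^+ (p * t ^ 2).
Proof.
move=> s_gt0 t_gt0 st; rewrite /near_pell_ratio.
have s_neq0 : s%:R != 0 :> rat by rewrite pnatr_eq0 -lt0n.
have t_neq0 : t%:R != 0 :> rat by rewrite pnatr_eq0 -lt0n.
case: ltnP => [lt_ba | le_ab].
  have sE : (s ^ 2 = p * t ^ 2 + 2)%N by case: st; lia.
  by rewrite {1}sE exprD natrM !natrX; field.
have tE : (p * t ^ 2 = s ^ 2 + 2)%N by case: st; lia.
by rewrite [in RHS]tE exprD natrM !natrX; field.
Qed.

Lemma mem_S_near_pell_point [p s t] : (p %% 4 = 3)%N -> (0 < s)%N -> (1 < t)%N ->
  near_pell p s t -> S 2 p (near_pell_point p s t).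
Proof.
move=> p_mod4 s_gt0 t_gt1 st; have t_gt0 := ltnW t_gt1; have p_gt2 : (2 < p)%N by lia.
apply: mem_S_pow; rewrite ?near_pell_ratio_gt0 ?sqrn_gt0 ?muln_gt0 ?coprime_near_pell //.
- rewrite /near_pell_ratio; case: ifP => _; apply: contraTneq isT => /divr1_eq /eqP;
    rewrite eqr_nat => /eqP st_eq; rewrite st_eq in st; clear p_mod4; case: st; nia.
- by rewrite t_gt0 andbT; lia.
- by case: st; lia.
exact: near_pell_ratio_eq.
Qed.

Lemma near_pell_point_inj [p s1 t1 s2 t2] : (0 < p)%N ->
  (0 < s1)%N -> (0 < t1)%N -> near_pell p s1 t1 ->
  (0 < s2)%N -> (0 < t2)%N -> near_pell p s2 t2 ->
  pell_norm p s1 t1 = pell_norm p s2 t2 ->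
  near_pell_point p s1 t1 = near_pell_point p s2 t2 -> t1 = t2.
Proof.
move=> p_gt0 s1_gt0 t1_gt0 st1 s2_gt0 t2_gt0 st2 N12 pt12.
have ratio s t : (0 < s)%N -> (0 < t)%N -> near_pell p s t ->
    (near_pell_point p s t).2 * (t ^ 2)%:R = (s ^ 2)%:R * (near_pell_point p s t).1.
  move=> s_gt0 t_gt0 /(near_pell_ratio_eq s_gt0 t_gt0) /=.
  rewrite natrM mulrCA -mulrA => /(mulfI _); apply; by rewrite pnatr_eq0 -lt0n.
have := ratio _ _ s1_gt0 t1_gt0 st1; have := ratio _ _ s2_gt0 t2_gt0 st2; rewrite -pt12.
set x := (near_pell_point p s1 t1).1; set y := (near_pell_point p s1 t1).2 => E2 E1.
have x_neq0 : x != 0 by rewrite gt_eqF // exprn_gt0 // near_pell_ratio_gt0.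
have /eqP : (s1 ^ 2 * t2 ^ 2)%:R * x = (s2 ^ 2 * t1 ^ 2)%:R * x.
  rewrite !natrM; transitivity (y * (t1 ^ 2)%:R * (t2 ^ 2)%:R); first by rewrite E1; ring.
  by rewrite mulrAC E2; ring.
rewrite (inj_eq (mulIf x_neq0)) eqr_nat => /eqP cross.
have : pell_norm p s1 t1 * (t2%:Z ^+ 2 - t1%:Z ^+ 2) = 0.
  transitivity (s1%:Z ^+ 2 * t2%:Z ^+ 2 - s2%:Z ^+ 2 * t1%:Z ^+ 2).
    by rewrite mulrBr {2}N12 /pell_norm; ring.
  by lia.
move=> /eqP; rewrite mulf_eq0 => /orP[|/eqP]; last by nia.
by rewrite /pell_norm; case: st1; lia.
Qed.

Local Close Scope ring_scope.

Theorem lemma6 (p : nat) :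
  prime p -> p %% 4 = 3 -> ~ finite_set (S 2 p).
Proof.
move=> p_pr p_mod4.
have [u [v [v_gt0 uv]]] := pell_solvable p_pr.
have [s [t [s_gt0 t_gt0 st]]] := near_pell_of_pell p_pr p_mod4 v_gt0 uv.
have u_gt0 : (0 < u)%N by rewrite -sqrn_gt0 uv addn1.
pose z n := iter n.+1 (pell_step p u v) (s, t).
have z_inc := pell_iter_snd_increasing p u v (s, t) u_gt0 v_gt0 s_gt0.
have z_fst n : (0 < (z n).1)%N := pell_iter_fst_gt0 p u v (s, t) n.+1 u_gt0 s_gt0.
have z_snd n : (1 < (z n).2)%N := leq_ltn_trans t_gt0 (z_inc 0 n.+1 (ltn0Sn n)).
have z_norm n : pell_norm p (z n).1 (z n).2 = pell_norm p s t.
  exact: pell_norm_iter p u v (s, t) n.+1 uv.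
have z_near n : near_pell p (z n).1 (z n).2.
  by move: (z_norm n); rewrite /pell_norm /near_pell; case: st; lia.
apply: (infinite_set_inj_nat (fun n => near_pell_point p (z n).1 (z n).2)) => [m n | n].
  move/(near_pell_point_inj (prime_gt0 p_pr) (z_fst m) (ltnW (z_snd m)) (z_near m)
    (z_fst n) (ltnW (z_snd n)) (z_near n)).
  by rewrite !z_norm => /(_ erefl) /(incn_inj (leq_mono z_inc)) /succn_inj.
exact: mem_S_near_pell_point p_mod4 (z_fst n) (z_snd n) (z_near n).
Qed.
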